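(* Let $k$ be a field of characteristic $0$ and let $\mathcal L$ be an fgc centreless Lie torus of type $(\Delta,\Lambda)$ over $k$ with centroid $C$ and $\Gamma=\Gamma(\mathcal L)$. Let $\lambda_1=0,\lambda_2,\dots,\lambda_m$ be a list of representatives of the cosets of $\Gamma$ in $\Lambda$; for $\alpha\in\Delta$ and $1\le i\le m$ let $B_\alpha^i$ be a (finite) $k$-basis of $\mathcal L_\alpha^{\lambda_i}$; put $B_\alpha=\bigcup_{i=1}^m B_\alpha^i$ and $B=\bigcup_{\alpha\in\Delta}B_\alpha$. Then: (i) for each $\alpha\in Q$, $\mathcal L_\alpha$ is a $C$-submodule of $\mathcal L$ and $B_\alpha$ is a $\Lambda$-homogeneous $C$-basis of $\mathcal L_\alpha$; hence $\mathcal L_\alpha$ is a free $C$-module of finite rank; (ii) $B$ is a $Q\times\Lambda$-homogeneous $C$-basis of $\mathcal L$; hence $\mathcal L$ is a free $C$-module of finite rank.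
   Context: An irreducible finite root system in a finite-dimensional $k$-vector space is a finite subset $\Delta$ containing $0$ with $\Delta^\times:=\Delta\setminus\{0\}$ an irreducible (possibly non-reduced) finite root system in the usual sense; $Q=\mathrm{span}_{\mathbb Z}(\Delta)$, $\alpha^\vee$ the coroot of $\alpha\in\Delta^\times$, $\Delta^\times_{\mathrm{ind}}=\Delta^\times\setminus2\Delta^\times$. Let $\Lambda$ be a finitely generated free abelian group. A Lie torus of type $(\Delta,\Lambda)$ is a Lie algebra $\mathcal L$ over $k$ with a $Q\times\Lambda$-grading $\mathcal L=\bigoplus\mathcal L_\alpha^\lambda$ ($\mathcal L_\alpha:=\bigoplus_\lambda\mathcal L_\alpha^\lambda$, $\mathcal L^\lambda:=\bigoplus_\alpha\mathcal L_\alpha^\lambda$) such that: (LT1) $\{\alpha:\mathcal L_\alpha\neq0\}=\Delta$; (LT2)(i) $\mathcal L_\alpha^0\neq0$ for $\alpha\in\Delta^\times_{\mathrm{ind}}$; (ii) whenever $\alpha\in\Delta^\times$ and $\mathcal L_\alpha^\lambda\ne0$ there are $e\in\mathcal L_\alpha^\lambda$, $f\in\mathcal L_{-\alpha}^{-\lambda}$ with $\mathcal L_\alpha^\lambda=ke$, $\mathcal L_{-\alpha}^{-\lambda}=kf$, $[[e,f],x]=\langle\beta,\alpha^\vee\rangle x$ for $x\in\mathcal L_\beta$, $\beta\in Q$; (LT3) $\mathcal L$ is generated by the $\mathcal L_\alpha$, $\alpha\in\Delta^\times$; (LT4) $\Lambda$ is generated by $\{\lambda:\mathcal L^\lambda\ne0\}$.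 The centroid is $C=\{c\in\mathrm{End}_k(\mathcal L):c[x,y]=[cx,y]=[x,cy]\ \forall x,y\}$; $\mathcal L$ is fgc if it is finitely generated as a $C$-module, and centreless if its centre is $0$. For $\lambda\in\Lambda$ let $C^\lambda=\{c\in C: c(\mathcal L^\mu)\subseteq\mathcal L^{\mu+\lambda}\ \forall\mu\}$; then $C=\bigoplus_\lambda C^\lambda$, and $\Gamma(\mathcal L):=\{\lambda: C^\lambda\neq0\}$ is a subgroup of $\Lambda$. For $\mathcal L$ fgc centreless it is known that $\Lambda/\Gamma$ is finite and each $\mathcal L^\lambda$ is finite-dimensional. *)

From HB Require Import structures.
From mathcomp Require Import all_boot all_order all_algebra.
Set Implicit Arguments. Unset Strict Implicit. Unset Printing Implicit Defensive.
Import GRing.Theory Num.Theory.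
Local Open Scope ring_scope.

(* Lambda is modelled as Z^n = 'rV[int]_n (any f.g. free abelian group is one).
   Subspaces / graded pieces of the (possibly infinite-dimensional) algebra L
   are Prop-valued predicates on L. *)

Definition is_subspace (k : fieldType) (L : lmodType k) (S : L -> Prop) : Prop :=
  S 0 /\ (forall (a : k) x y, S x -> S y -> S (a *: x + y)).

Definition is_lie_algebra (k : fieldType) (L : lmodType k) (br : L -> L -> L) : Prop :=
  (forall (a : k) x y z, br (a *: x + y) z = a *: br x z + br y z) /\
  (forall (a : k) x y z, br z (a *: x + y) = a *: br z x + br z y) /\
  (forall x, br x x = 0) /\
  (forall x y z, br x (br y z) + br y (br z x) + br z (br x y) = 0).

Definition nonzero_roots (k : fieldType) (V : vectType k) (D : seq V) : seq V :=
  [seq a <- D | a != 0].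

(* Delta (a duplicate-free list containing 0) is an irreducible finite root system
   (possibly non-reduced) in V, with coroots cor a : V -> k for a in Delta^x. *)
Definition is_irred_root_system (k : fieldType) (V : vectType k) (D : seq V)
    (cor : V -> V -> k) : Prop :=
  uniq D /\ 0 \in D /\ (<<D>>%VS = fullv) /\
  (forall a, a \in nonzero_roots D ->
     (forall (c : k) x y, cor a (c *: x + y) = c * cor a x + cor a y) /\
     cor a a = 2 /\
     (forall b, b \in D -> b - cor a b *: a \in D) /\
     (forall b, b \in D -> exists z : int, cor a b = z%:~R)) /\
  nonzero_roots D != [::] /\
  (forall P : pred V,
     (forall a b, a \in nonzero_roots D -> b \in nonzero_roots D ->
        P a -> ~~ P b -> cor a b = 0) ->
     all P (nonzero_roots D) || all (predC P) (nonzero_roots D)).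

Definition inQ (k : fieldType) (V : vectType k) (D : seq V) (a : V) : Prop :=
  exists z : 'I_(size D) -> int, a = \sum_(i < size D) (D`_i) *~ (z i).

(* A grading by (a subset of) V x Lambda: G a l = the piece L_a^l. *)
Definition is_graded (k : fieldType) (V : vectType k) (L : lmodType k) (n : nat)
    (br : L -> L -> L) (G : V -> 'rV[int]_n -> L -> Prop) : Prop :=
  (forall a l, is_subspace (G a l)) /\
  (forall x : L, exists (s : seq (V * 'rV[int]_n)) (f : V * 'rV[int]_n -> L),
      (forall p, G p.1 p.2 (f p)) /\ x = \sum_(p <- s) f p) /\
  (forall (s : seq (V * 'rV[int]_n)) (f : V * 'rV[int]_n -> L), uniq s ->
      (forall p, G p.1 p.2 (f p)) -> \sum_(p <- s) f p = 0 ->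
      forall p, p \in s -> f p = 0) /\
  (forall a b l m x y, G a l x -> G b m y -> G (a + b) (l + m) (br x y)).

Definition Lroot (k : fieldType) (V : vectType k) (L : lmodType k) (n : nat)
    (G : V -> 'rV[int]_n -> L -> Prop) (a : V) (x : L) : Prop :=
  exists (s : seq 'rV[int]_n) (f : 'rV[int]_n -> L),
    (forall l, G a l (f l)) /\ x = \sum_(l <- s) f l.

Definition Ldeg (k : fieldType) (V : vectType k) (L : lmodType k) (n : nat)
    (G : V -> 'rV[int]_n -> L -> Prop) (l : 'rV[int]_n) (x : L) : Prop :=
  exists (s : seq V) (f : V -> L), (forall a, G a l (f a)) /\ x = \sum_(a <- s) f a.

Definition is_Lie_torus (k : fieldType) (V : vectType k) (L : lmodType k) (n : nat)
    (br : L -> L -> L) (G : V -> 'rV[int]_n -> L -> Prop) (D : seq V)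
    (cor : V -> V -> k) : Prop :=
  is_lie_algebra br /\ is_irred_root_system D cor /\ is_graded br G /\
  (forall a, (exists x, Lroot G a x /\ x <> 0) <-> a \in D) /\
  (forall a, a \in nonzero_roots D ->
     (forall b, b \in nonzero_roots D -> a != b *+ 2) ->
     exists x, G a 0 x /\ x <> 0) /\
  (forall a l, a \in nonzero_roots D -> (exists x, G a l x /\ x <> 0) ->
     exists e f, G a l e /\ G (- a) (- l) f /\
       (forall x, G a l x <-> exists c : k, x = c *: e) /\
       (forall x, G (- a) (- l) x <-> exists c : k, x = c *: f) /\
       (forall b x, inQ D b -> Lroot G b x -> br (br e f) x = cor a b *: x)) /\
  (forall S : L -> Prop, is_subspace S -> (forall x y, S x -> S y -> S (br x y)) ->
     (forall a x, a \in nonzero_roots D -> Lroot G a x -> S x) -> forall x, S x) /\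
  (forall H : 'rV[int]_n -> Prop, H 0 -> (forall l m, H l -> H m -> H (l - m)) ->
     (forall l, (exists x, Ldeg G l x /\ x <> 0) -> H l) -> forall l, H l).

Definition in_centroid (k : fieldType) (L : lmodType k) (br : L -> L -> L)
    (c : L -> L) : Prop :=
  (forall (a : k) x y, c (a *: x + y) = a *: c x + c y) /\
  (forall x y, c (br x y) = br (c x) y) /\
  (forall x y, c (br x y) = br x (c y)).

Definition fgc (k : fieldType) (L : lmodType k) (br : L -> L -> L) : Prop :=
  exists s : seq L, forall x : L, exists cs : 'I_(size s) -> L -> L,
    (forall i, in_centroid br (cs i)) /\ x = \sum_(i < size s) cs i s`_i.

Definition centreless (k : fieldType) (L : lmodType k) (br : L -> L -> L) : Prop :=
  forall z : L, (forall x, br z x = 0) -> z = 0.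

Definition in_Cdeg (k : fieldType) (V : vectType k) (L : lmodType k) (n : nat)
    (br : L -> L -> L) (G : V -> 'rV[int]_n -> L -> Prop) (l : 'rV[int]_n)
    (c : L -> L) : Prop :=
  in_centroid br c /\ forall m x, Ldeg G m x -> Ldeg G (m + l) (c x).

Definition in_Gamma (k : fieldType) (V : vectType k) (L : lmodType k) (n : nat)
    (br : L -> L -> L) (G : V -> 'rV[int]_n -> L -> Prop) (l : 'rV[int]_n) : Prop :=
  exists c, in_Cdeg br G l c /\ exists x, c x <> 0.

(* reps = lambda_1 = 0, ..., lambda_{m+1}: a set of coset representatives *)
Definition coset_reps (k : fieldType) (V : vectType k) (L : lmodType k) (n : nat)
    (br : L -> L -> L) (G : V -> 'rV[int]_n -> L -> Prop) (m : nat)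
    (reps : 'I_m.+1 -> 'rV[int]_n) : Prop :=
  reps ord0 = 0 /\
  (forall l, exists i, in_Gamma br G (l - reps i)) /\
  (forall i j, in_Gamma br G (reps i - reps j) -> i = j).

Definition k_basis (k : fieldType) (L : lmodType k) (M : L -> Prop) (s : seq L) : Prop :=
  (forall b, b \in s -> M b) /\
  (forall x, M x -> exists c : 'I_(size s) -> k, x = \sum_(i < size s) c i *: s`_i) /\
  (forall c : 'I_(size s) -> k, \sum_(i < size s) c i *: s`_i = 0 -> forall i, c i = 0).

Definition centroid_basis (k : fieldType) (L : lmodType k) (br : L -> L -> L)
    (M : L -> Prop) (s : seq L) : Prop :=
  (forall b, b \in s -> M b) /\
  (forall x, M x -> exists cs : 'I_(size s) -> L -> L,
      (forall i, in_centroid br (cs i)) /\ x = \sum_(i < size s) cs i s`_i) /\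
  (forall cs : 'I_(size s) -> L -> L, (forall i, in_centroid br (cs i)) ->
      \sum_(i < size s) cs i s`_i = 0 -> forall i y, cs i y = 0).

Definition Balpha (k : fieldType) (V : vectType k) (L : lmodType k) (m : nat)
    (D : seq V) (Bs : V -> 'I_m.+1 -> seq L) (a : V) : seq L :=
  if a \in D then flatten [seq Bs a i | i <- enum 'I_m.+1] else [::].

Definition Ball (k : fieldType) (V : vectType k) (L : lmodType k) (m : nat)
    (D : seq V) (Bs : V -> 'I_m.+1 -> seq L) : seq L :=
  flatten [seq Balpha D Bs a | a <- D].

From HB Require Import structures.
From mathcomp Require Import all_boot all_order all_algebra.
From Stdlib Require Import Classical ClassicalEpsilon.
From mathcomp Require Import ring.
Import GRing.Theory.
Local Open Scope ring_scope.
Set Implicit Arguments. Unset Strict Implicit. Unset Printing Implicit Defensive.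

(* The centroid preserves every root space: the toral elements [e, f] of the
   sl2-triples of LT2 commute with the centroid and act on [L_b] by the scalars
   <b, a^v>, which separate roots.  A centreless Lie torus is graded-simple, so a
   nonzero homogeneous centroid element of degree [g] is bijective and shifts the
   Lambda-degree by [g]; hence Gamma is a group and [C^g = k t] for any nonzero
   [t] in [C^g].  Spanning: [L_a^l = t (L_a^(lambda_i))] where [lambda_i]
   represents [l + Gamma] and [t] is a nonzero element of [C^(l - lambda_i)].
   Independence: in a C-linear relation among the elements of [B], the degree-[g]
   part of each coefficient is a scalar multiple of one [t] in [C^g]; as the
   [lambda_i] lie in distinct cosets, projecting the relation onto a single degree
   leaves a k-linear relation inside one [B_a^i]. *)

Definition asbool (Q : Prop) : bool :=
  if excluded_middle_informative Q then true else false.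

Lemma asboolP (Q : Prop) : reflect Q (asbool Q).
Proof. by rewrite /asbool; case: excluded_middle_informative => h; constructor. Qed.

Section BigSeq.
Variables (M : nmodType) (T : eqType).

Lemma big_pred1_seq (r : seq T) (a : T) (F : T -> M) : uniq r ->
  \sum_(i <- r | i == a) F i = if a \in r then F a else 0.
Proof.
elim: r => [|x r IH] /=; first by rewrite big_nil.
case/andP => xr ur; rewrite big_cons inE IH //.
case: eqP => [<-|]; last by rewrite eq_sym => /eqP/negbTE ->.
by rewrite (negbTE xr) addr0 eqxx.
Qed.

Lemma big_uniq_superset (s u : seq T) (F : T -> M) : uniq s -> uniq u ->
  {subset s <= u} ->
  \sum_(p <- s) F p = \sum_(p <- u) (if p \in s then F p else 0).
Proof.
move=> us uu su; rewrite -big_mkcond -big_filter; apply: perm_big.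
apply: uniq_perm => //; first exact: filter_uniq.
by move=> p; rewrite mem_filter; case: (boolP (p \in s)) => //= /su ->.
Qed.

End BigSeq.

Section LinearMaps.
Variables (k : fieldType) (L : lmodType k) (f : L -> L).
Hypothesis lin_f : linear f.

Let lf : {linear L -> L} := HB.pack f (GRing.isLinear.Build k L L *:%R f lin_f).

Lemma lin0 : f 0 = 0. Proof. exact: (linear0 lf). Qed.
Lemma linD x y : f (x + y) = f x + f y. Proof. exact: (linearD lf). Qed.
Lemma linZ a x : f (a *: x) = a *: f x. Proof. exact: (linearZ_LR lf). Qed.
Lemma linN x : f (- x) = - f x. Proof. exact: (linearN lf). Qed.
Lemma linB x y : f (x - y) = f x - f y. Proof. exact: (linearB lf). Qed.
Lemma lin_sum (I : Type) (r : seq I) (P : pred I) (F : I -> L) :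
  f (\sum_(i <- r | P i) F i) = \sum_(i <- r | P i) f (F i).
Proof. exact: (linear_sum lf). Qed.

End LinearMaps.

Lemma linear_comp (k : fieldType) (L : lmodType k) (f g : L -> L) :
  linear f -> linear g -> linear (fun x => f (g x)).
Proof. by move=> lf lg a x y; rewrite lg lf. Qed.

Section Subspaces.
Variables (k : fieldType) (L : lmodType k) (S : L -> Prop).
Hypothesis subS : is_subspace S.

Lemma subspace0 : S 0. Proof. by case: subS. Qed.
Lemma subspaceD x y : S x -> S y -> S (x + y).
Proof. by case: subS => _ h Sx Sy; have := h 1 x y Sx Sy; rewrite scale1r. Qed.
Lemma subspaceZ a x : S x -> S (a *: x).
Proof. by case: subS => S0 h Sx; have := h a x 0 Sx S0; rewrite addr0. Qed.
Lemma subspaceB x y : S x -> S y -> S (x - y).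
Proof. by move=> Sx Sy; rewrite -scaleN1r; apply: subspaceD => //; apply: subspaceZ. Qed.

End Subspaces.

Section LieAlgebra.
Variables (k : fieldType) (L : lmodType k) (br : L -> L -> L).
Hypothesis lieL : is_lie_algebra br.

Lemma br_linearl y : linear (br ^~ y). Proof. by case: lieL => h _ a x z; apply: h. Qed.
Lemma br_linearr x : linear (br x). Proof. by case: lieL => _ [h _] a y z; apply: h. Qed.
Lemma br0l y : br 0 y = 0. Proof. exact: lin0 (br_linearl y). Qed.
Lemma br0r x : br x 0 = 0. Proof. exact: lin0 (br_linearr x). Qed.
Lemma brxx x : br x x = 0. Proof. by case: lieL => _ [] _ []. Qed.
Lemma br_jacobi x y z : br x (br y z) + br y (br z x) + br z (br x y) = 0.
Proof. by case: lieL => _ [] _ []. Qed.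

Lemma brC x y : br x y = - br y x.
Proof.
have := brxx (x + y).
rewrite (linD (br_linearl _)) !(linD (br_linearr _)) !brxx add0r addr0 => /eqP.
by rewrite addr_eq0 => /eqP.
Qed.

Lemma centroid_linear c : in_centroid br c -> linear c.
Proof. by case=> h _ a x y; apply: h. Qed.
Lemma centroid_brl c x y : in_centroid br c -> c (br x y) = br (c x) y.
Proof. by case=> _ []. Qed.
Lemma centroid_brr c x y : in_centroid br c -> c (br x y) = br x (c y).
Proof. by case=> _ []. Qed.

Lemma centroid0 : in_centroid br (fun _ => 0).
Proof. by split=> [*|]; [rewrite scaler0 addr0 | split=> *; rewrite ?br0l ?br0r]. Qed.

Lemma centroid_id : in_centroid br id. Proof. by []. Qed.

Lemma centroidD c1 c2 : in_centroid br c1 -> in_centroid br c2 ->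
  in_centroid br (fun y => c1 y + c2 y).
Proof.
move=> C1 C2; split.
  by move=> a x y; rewrite (centroid_linear C1) (centroid_linear C2) scalerDr addrACA.
split=> x y.
  by rewrite (centroid_brl _ _ C1) (centroid_brl _ _ C2) (linD (br_linearl _)).
by rewrite (centroid_brr _ _ C1) (centroid_brr _ _ C2) (linD (br_linearr _)).
Qed.

Lemma centroidZ (a : k) c : in_centroid br c -> in_centroid br (fun y => a *: c y).
Proof.
move=> Cc; split.
  by move=> b x y; rewrite (centroid_linear Cc) scalerDr !scalerA mulrC.
split=> x y.
  by rewrite (centroid_brl _ _ Cc) (linZ (br_linearl _)).
by rewrite (centroid_brr _ _ Cc) (linZ (br_linearr _)).
Qed.

Lemma centroid_comp c1 c2 : in_centroid br c1 -> in_centroid br c2 ->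
  in_centroid br (fun y => c1 (c2 y)).
Proof.
move=> C1 C2; split; first exact: linear_comp (centroid_linear C1) (centroid_linear C2).
split=> x y; first by rewrite (centroid_brl _ _ C2) (centroid_brl _ _ C1).
by rewrite (centroid_brr _ _ C2) (centroid_brr _ _ C1).
Qed.

End LieAlgebra.

Section CentroidSpan.
Variables (k : fieldType) (L : lmodType k) (br : L -> L -> L).
Hypothesis lieL : is_lie_algebra br.

Definition in_Cspan (s : seq L) (x : L) := exists g : nat -> L -> L,
  (forall j, in_centroid br (g j)) /\ x = \sum_(0 <= j < size s) g j s`_j.

Lemma Cspan0 s : in_Cspan s 0.
Proof. by exists (fun _ _ => 0); split=> [j|]; [exact: centroid0 | rewrite big1]. Qed.

Lemma CspanD s x y : in_Cspan s x -> in_Cspan s y -> in_Cspan s (x + y).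
Proof.
move=> [g1 [C1 ->]] [g2 [C2 ->]]; exists (fun j w => g1 j w + g2 j w).
by split=> [j|]; [exact: centroidD | rewrite -big_split].
Qed.

Lemma Cspan_sum (I : Type) (r : seq I) (F : I -> L) s :
  (forall i, in_Cspan s (F i)) -> in_Cspan s (\sum_(i <- r) F i).
Proof.
move=> spanF; elim: r => [|i r IH]; first by rewrite big_nil; apply: Cspan0.
by rewrite big_cons; apply: CspanD.
Qed.

Lemma Cspan_catl s t x : in_Cspan s x -> in_Cspan (s ++ t) x.
Proof.
move=> [g [Cg ->]]; exists (fun j => if (j < size s)%N then g j else fun _ => 0); split.
  by move=> j; case: ifP => _; [apply: Cg | apply: centroid0].
rewrite size_cat [RHS](@big_cat_nat _ _ _ (size s)) ?leq_addr //=.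
rewrite [X in _ = _ + X]big1_seq ?addr0; last first.
  by move=> j /andP [_]; rewrite mem_index_iota => /andP [] /=; rewrite leqNgt => /negbTE ->.
by apply: eq_big_nat => j /andP [_ js]; rewrite js nth_cat js.
Qed.

Lemma Cspan_catr s t x : in_Cspan t x -> in_Cspan (s ++ t) x.
Proof.
move=> [g [Cg ->]]; exists (fun j => if (j < size s)%N then fun _ => 0 else g (j - size s)%N).
split=> [j|]; first by case: ifP => _; [apply: centroid0 | apply: Cg].
symmetry; rewrite size_cat (@big_cat_nat _ _ _ (size s) 0 (size s + size t)) ?leq_addr //=.
rewrite big1_seq ?add0r; last by move=> j /andP [_]; rewrite mem_index_iota => /andP [_ ->].
rewrite -{1}[size s]add0n big_addn addKn; apply: eq_big_nat => j _.
by rewrite ltnNge leq_addl /= addnK nth_cat ltnNge leq_addl /= addnK.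
Qed.

Lemma Cspan_flatten (T : eqType) (F : T -> seq L) (r : seq T) i x :
  i \in r -> in_Cspan (F i) x -> in_Cspan (flatten (map F r)) x.
Proof.
elim: r => [|j r IH] //=; rewrite inE => /orP [/eqP <- spanx|ir spanx].
  exact: Cspan_catl.
by apply: Cspan_catr; apply: IH.
Qed.

Lemma Cspan_centroid_kcomb s t (c : 'I_(size s) -> k) : in_centroid br t ->
  in_Cspan s (t (\sum_(i < size s) c i *: s`_i)).
Proof.
move=> Ct; exists (fun j w => oapp c 0 (insub j) *: t w); split.
  by move=> j; apply: centroidZ.
rewrite (lin_sum (centroid_linear Ct)) big_mkord; apply: eq_bigr => i _.
by rewrite valK /= (linZ (centroid_linear Ct)).
Qed.

Lemma CspanP s x : in_Cspan s x -> exists cs : 'I_(size s) -> L -> L,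
  (forall i, in_centroid br (cs i)) /\ x = \sum_(i < size s) cs i s`_i.
Proof. by move=> [g [Cg ->]]; exists (fun i => g i); split => //; rewrite big_mkord. Qed.

End CentroidSpan.

Section LabelledFreeness.
Variables (k : fieldType) (L : lmodType k) (T : eqType) (t0 : T).
Local Notation d0 := ((0 : L), t0).

Definition labelled_free (sl : seq (L * T)) := forall q (c : nat -> k),
  \sum_(0 <= j < size sl | (nth d0 sl j).2 == q) c j *: (nth d0 sl j).1 = 0 ->
  forall j, (j < size sl)%N -> (nth d0 sl j).2 == q -> c j = 0.

Lemma labelled_sum_cat (s1 s2 : seq (L * T)) q (c : nat -> k) :
  \sum_(0 <= j < size (s1 ++ s2) | (nth d0 (s1 ++ s2) j).2 == q)
    c j *: (nth d0 (s1 ++ s2) j).1 =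
  \sum_(0 <= j < size s1 | (nth d0 s1 j).2 == q) c j *: (nth d0 s1 j).1 +
  \sum_(0 <= j < size s2 | (nth d0 s2 j).2 == q) c (j + size s1)%N *: (nth d0 s2 j).1.
Proof.
rewrite size_cat (@big_cat_nat _ _ _ (size s1)) ?leq_addr //=; congr (_ + _).
  apply: congr_big_nat => // j; first by case/andP => _ js; rewrite nth_cat js.
  by case/andP => _ /andP [_ js]; rewrite nth_cat js.
rewrite -{1}[size s1]add0n big_addn addKn; apply: congr_big_nat => // j _.
  by rewrite nth_cat ltnNge leq_addl /= addnK.
by rewrite nth_cat ltnNge leq_addl /= addnK.
Qed.

Lemma labelled_sum_nolabel (s : seq (L * T)) q (c : nat -> k) :
  ~~ has (fun x => x.2 == q) s ->
  \sum_(0 <= j < size s | (nth d0 s j).2 == q) c j *: (nth d0 s j).1 = 0.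
Proof.
move=> /hasPn noq; apply: big1_seq => j /andP [lj]; rewrite mem_index_iota => /andP [_ js].
by move: (noq _ (mem_nth d0 js)); rewrite lj.
Qed.

Lemma labelled_free_cat s1 s2 : labelled_free s1 -> labelled_free s2 ->
  (forall x y, x \in s1 -> y \in s2 -> x.2 != y.2) -> labelled_free (s1 ++ s2).
Proof.
move=> free1 free2 disj q c; rewrite labelled_sum_cat size_cat => sum0 j jlt.
have lab_in s j' : (j' < size s)%N -> (nth d0 s j').2 == q -> has (fun x => x.2 == q) s.
  by move=> js lq; apply/hasP; exists (nth d0 s j'); rewrite ?mem_nth.
have disjq : ~~ has (fun x => x.2 == q) s1 || ~~ has (fun x => x.2 == q) s2.
  rewrite -negb_and; apply/andP => -[/hasP [x xs /eqP xq] /hasP [y ys /eqP yq]].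
  by move: (disj x y xs ys); rewrite xq yq eqxx.
rewrite nth_cat; case: ifP => js lq.
  have no2 : ~~ has (fun x => x.2 == q) s2 by move: disjq; rewrite (lab_in _ _ js lq).
  by apply: (free1 q c) => //; move: sum0; rewrite (labelled_sum_nolabel (s := s2)) // addr0.
have js' : (j - size s1 < size s2)%N by rewrite ltn_subLR ?jlt // leqNgt js.
have no1 : ~~ has (fun x => x.2 == q) s1 by move: disjq; rewrite (lab_in _ _ js' lq) orbF.
move: sum0; rewrite (labelled_sum_nolabel (s := s1)) // add0r => /(free2 q) /(_ _ js' lq).
by rewrite subnK // leqNgt js.
Qed.

Lemma labelled_free_const (s : seq L) q :
  (forall c : 'I_(size s) -> k, \sum_(i < size s) c i *: s`_i = 0 -> forall i, c i = 0) ->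
  labelled_free [seq (b, q) | b <- s].
Proof.
move=> free q0 c; rewrite size_map => sum0 j js lab.
have lq : q == q0 by move: lab; rewrite (nth_map 0).
apply: (free (fun i => c i) _ (Ordinal js)).
rewrite -(big_mkord xpredT (fun i => c i *: s`_i)) -[RHS]sum0; apply: congr_big_nat => // i.
  by case/andP => _ iS; rewrite (nth_map 0) // lq.
by case/andP => _ /andP [_ iS]; rewrite (nth_map 0).
Qed.

Lemma labelled_free_flatten (I : eqType) (r : seq I) (F : I -> seq (L * T)) (h : T -> I) :
  uniq r -> (forall i, i \in r -> labelled_free (F i)) ->
  (forall i x, i \in r -> x \in F i -> h x.2 = i) ->
  labelled_free (flatten (map F r)).
Proof.
elim: r => [|i r IH] //= /andP [ir ur] freeF hF.
apply: labelled_free_cat; first by apply: freeF; rewrite mem_head.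
  apply: IH => // [j jr|j x jr xj]; first by apply: freeF; rewrite inE jr orbT.
  by apply: hF => //; rewrite inE jr orbT.
move=> x y xi /flattenP [s' /mapP [j jr ->] yj]; apply/negP => /eqP E.
have hx := hF i x (mem_head _ _) xi.
have hy : h y.2 = j by apply: hF => //; rewrite inE jr orbT.
by move: ir; rewrite -hx E hy jr.
Qed.

End LabelledFreeness.

Section RootSystem.
Variables (k : fieldType) (V : vectType k) (D : seq V) (cor : V -> V -> k).
Hypotheses (char0 : [pchar k] =i pred0) (rootsD : is_irred_root_system D cor).
Local Notation nz := (nonzero_roots D).

Lemma mem_nonzero_roots a : (a \in nz) = (a != 0) && (a \in D).
Proof. by rewrite mem_filter. Qed.

Lemma roots_uniq : uniq D. Proof. by case: rootsD. Qed.
Lemma root0 : 0 \in D. Proof. by case: rootsD => _ []. Qed.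

Lemma coroot_scalar a : a \in nz -> scalar (cor a).
Proof. by case: rootsD => _ [_ [_ [h _]]] /h [lin _] c x y; apply: lin. Qed.
Lemma coroot_self a : a \in nz -> cor a a = 2.
Proof. by case: rootsD => _ [_ [_ [h _]]] /h [_ []]. Qed.
Lemma root_reflect a b : a \in nz -> b \in D -> b - cor a b *: a \in D.
Proof. by case: rootsD => _ [_ [_ [h _]]] /h [_ [_ []]] refl _; apply: refl. Qed.

Lemma coroot0 a : a \in nz -> cor a 0 = 0.
Proof.
move=> an; have := coroot_scalar an 1 0 0; rewrite scale1r addr0 mul1r => E.
by apply: (@addrI _ (cor a 0)); rewrite addr0 -E.
Qed.

Lemma coroot_lin2 a : a \in nz -> forall (y1 y2 : k) u v,
  cor a (y1 *: u + y2 *: v) = y1 * cor a u + y2 * cor a v.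
Proof.
move=> an y1 y2 u v; rewrite coroot_scalar //; congr (_ + _).
by rewrite -[y2 *: v]addr0 coroot_scalar // coroot0 // !addr0.
Qed.

Lemma natf_neq0 (j : nat) : (0 < j)%N -> (j%:R : k) != 0.
Proof. by rewrite ((pcharf0P k).1 char0) -lt0n. Qed.

Lemma natf_inj : injective (fun j : nat => j%:R : k).
Proof.
move=> i j /=; wlog ji : i j / (j <= i)%N => [W E|E].
  by case: (leqP j i) => [|/ltnW] h; [apply: W | apply/esym/W].
apply/eqP; rewrite eqn_leq ji andbT -subn_eq0 -((pcharf0P k).1 char0).
by rewrite natrB // E subrr.
Qed.

Lemma root_string a b : a \in nz -> b \in nz -> cor a b = 2 -> cor b a = 2 ->
  forall j : nat, (1 - (j.*2)%:R) *: b + (j.*2)%:R *: a \in D.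
Proof.
move=> an bn cab cba; elim=> [|j IH].
  by rewrite double0 subr0 scale1r scale0r addr0; move: bn; rewrite mem_nonzero_roots => /andP [].
set c : k := (j.*2)%:R in IH *.
have -> : ((j.+1).*2)%:R = c + 2 :> k by rewrite doubleS /c -addn2 natrD.
have cb : cor b ((1 - c) *: b + c *: a) = 2.
  by rewrite coroot_lin2 // coroot_self // cba; ring.
have ca : cor a ((1 - c - 2) *: b + c *: a) = - 2.
  by rewrite coroot_lin2 // cab coroot_self //; ring.
have := root_reflect an (root_reflect bn IH); rewrite cb.
have -> : (1 - c) *: b + c *: a - 2 *: b = (1 - c - 2) *: b + c *: a.
  by rewrite addrAC -scalerBl.
rewrite ca scaleNr opprK -addrA -scalerDl.
by rewrite (_ : 1 - c - 2 = 1 - (c + 2)) //; ring.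
Qed.

(* Two distinct nonzero roots with the same coroot values would satisfy
   <a, b^v> = <b, a^v> = 2, and the reflections then produce the infinite string
   b + 2j (a - b) of roots. *)
Lemma roots_eq_of_coroots a b : a \in D -> b \in D ->
  (forall c, c \in nz -> cor c a = cor c b) -> a = b.
Proof.
move=> aD bD eq_cor; apply: NNPP => neq_ab.
have two_neq0 : (2 : k) != 0 by exact: (natf_neq0 (j := 2)).
have nz_of c : c != 0 -> c \in D -> c \in nz by rewrite mem_nonzero_roots => -> ->.
have [a0|a0] := eqVneq a 0.
  have bn : b \in nz by rewrite nz_of // -a0 eq_sym; apply/eqP.
  move: (eq_cor b bn); rewrite a0 coroot0 // coroot_self // => /esym/eqP.
  by rewrite (negbTE two_neq0).
have an := nz_of a a0 aD.
have [b0|b0] := eqVneq b 0.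
  move: (eq_cor a an); rewrite b0 coroot0 // coroot_self // => /eqP.
  by rewrite (negbTE two_neq0).
have bn := nz_of b b0 bD.
have neq_ab' : a != b by apply/eqP.
pose str (j : nat) := (1 - (j.*2)%:R) *: b + (j.*2)%:R *: a.
have strD j : str j \in D.
  by apply: root_string; rewrite // ?(eq_cor b bn) -?(eq_cor a an) coroot_self.
have str_inj : injective str.
  move=> i j eq_ij; apply/double_inj/natf_inj/eqP; rewrite -subr_eq0.
  have : ((i.*2)%:R - (j.*2)%:R) *: (a - b) = str i - str j :> V.
    rewrite /str opprD addrACA -!scalerBl scalerBr [LHS]addrC; congr (_ + _).
    by rewrite -scaleNr; congr (_ *: _); ring.
  by rewrite eq_ij subrr => /eqP; rewrite scaler_eq0 [a - b == 0]subr_eq0 (negbTE neq_ab') orbF.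
have str_uniq : uniq (map str (iota 0 (size D).+1)).
  by rewrite (map_inj_uniq str_inj) iota_uniq.
have str_sub : {subset map str (iota 0 (size D).+1) <= D} by move=> _ /mapP [j _ ->].
by have := uniq_leq_size str_uniq str_sub; rewrite size_map size_iota ltnn.
Qed.

Lemma nonzero_root_exists : exists a, a \in nz.
Proof.
by case: rootsD => _ [_ [_ [_ []]]]; case: nz => [|a r] // _ _; exists a; rewrite mem_head.
Qed.

Lemma mem_roots_inQ b : b \in D -> inQ D b.
Proof.
move=> bD; have il : (index b D < size D)%N by rewrite index_mem.
exists (fun i : 'I_(size D) => ((nat_of_ord i == index b D) : nat)%:Z).
rewrite (bigD1 (Ordinal il)) //= eqxx big1 ?addr0 ?nth_index //.
by move=> i ne; case: eqP => E //=; case/eqP: ne; exact: val_inj.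
Qed.

End RootSystem.

Section Grading.
Variables (k : fieldType) (V : vectType k) (L : lmodType k) (n : nat)
  (br : L -> L -> L) (G : V -> 'rV[int]_n -> L -> Prop).
Hypotheses (lieL : is_lie_algebra br) (gradG : is_graded br G).

Local Notation P := (V * 'rV[int]_n)%type.
Local Notation Gp p := (G p.1 p.2).

Lemma G_subspace a l : is_subspace (G a l). Proof. by case: gradG. Qed.

Lemma G0 a l : G a l 0. Proof. exact: subspace0 (G_subspace a l). Qed.

Lemma G_br a b l m x y : G a l x -> G b m y -> G (a + b) (l + m) (br x y).
Proof. by case: gradG => _ [_ [_]]; apply. Qed.

Lemma homogeneous_decomposition x : exists d : seq P * (P -> L),
  uniq d.1 /\ (forall p, Gp p (d.2 p)) /\ x = \sum_(p <- d.1) d.2 p.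
Proof.
have [s0 [f0 [Gf0 Ex]]] := (proj1 (proj2 gradG)) x; rewrite {x}Ex.
elim: s0 => [|q s0 [[s f] /= [us [Gf Es]]]]; first by exists ([::], f0); rewrite big_nil.
pose u := undup (q :: s).
pose g p := (if p == q then f0 q else 0) + (if p \in s then f p else 0).
exists (u, g); split; first exact: undup_uniq.
split=> [p|/=].
  apply: subspaceD; first exact: G_subspace.
    by case: eqP => [->|_]; [apply: Gf0 | apply: G0].
  by case: ifP => _; [apply: Gf | apply: G0].
have su : {subset s <= u} by move=> p; rewrite mem_undup inE orbC => ->.
rewrite big_split -big_mkcond big_pred1_seq ?undup_uniq // mem_undup mem_head.
by rewrite -big_uniq_superset ?undup_uniq ?big_cons ?Es.
Qed.

Definition hdecomp x : seq P * (P -> L) :=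
  proj1_sig (constructive_indefinite_description _ (homogeneous_decomposition x)).

Definition hsupp x := (hdecomp x).1.
Definition hcomp (p : P) x := if p \in hsupp x then (hdecomp x).2 p else 0.

Lemma hdecompP x : uniq (hsupp x) /\ (forall p, Gp p ((hdecomp x).2 p)) /\
  x = \sum_(p <- hsupp x) (hdecomp x).2 p.
Proof. exact: proj2_sig (constructive_indefinite_description _ (homogeneous_decomposition x)). Qed.

Lemma hsupp_uniq x : uniq (hsupp x). Proof. by case: (hdecompP x). Qed.

Lemma hcompG p x : Gp p (hcomp p x).
Proof. by rewrite /hcomp; case: ifP => _; [case: (hdecompP x) => _ [] | apply: G0]. Qed.

Lemma hcomp_out p x : p \notin hsupp x -> hcomp p x = 0.
Proof. by rewrite /hcomp => /negbTE ->. Qed.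

Lemma hcomp_sum x : x = \sum_(p <- hsupp x) hcomp p x.
Proof.
have [_ [_ E]] := hdecompP x; rewrite {1}E; apply: eq_big_seq => p ps.
by rewrite /hcomp ps.
Qed.

Lemma hcomp_sum_superset x (u : seq P) : uniq u -> {subset hsupp x <= u} ->
  x = \sum_(p <- u) hcomp p x.
Proof.
move=> uu su; rewrite {1}[x]hcomp_sum (big_uniq_superset _ (hsupp_uniq x) uu su).
by apply: eq_bigr => p _; case: ifP => // /negbT /hcomp_out ->.
Qed.

Lemma homogeneous_decomposition_unique (s s' : seq P) (f f' : P -> L) :
  uniq s -> uniq s' -> (forall p, Gp p (f p)) -> (forall p, Gp p (f' p)) ->
  \sum_(p <- s) f p = \sum_(p <- s') f' p ->
  forall p, (if p \in s then f p else 0) = (if p \in s' then f' p else 0).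
Proof.
move=> us us' Gf Gf' E p; set u := undup (s ++ s').
have uu : uniq u by exact: undup_uniq.
have su : {subset s <= u} by move=> q; rewrite mem_undup mem_cat => ->.
have su' : {subset s' <= u} by move=> q; rewrite mem_undup mem_cat orbC => ->.
pose g q := (if q \in s then f q else 0) - (if q \in s' then f' q else 0).
have Gg q : Gp q (g q).
  apply: subspaceB; first exact: G_subspace.
    by case: ifP => _; [apply: Gf | apply: G0].
  by case: ifP => _; [apply: Gf' | apply: G0].
have sum_g : \sum_(q <- u) g q = 0.
  by rewrite sumrB -(big_uniq_superset _ us uu su) -(big_uniq_superset _ us' uu su') E subrr.
case pu : (p \in u).
  apply/eqP; rewrite -subr_eq0; apply/eqP.
  by case: gradG => _ [_ [indep _]]; apply: (indep u g uu Gg sum_g p pu).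
have notin t : {subset t <= u} -> p \in t = false.
  by move=> tu; apply/negbTE/negP => /tu; rewrite pu.
by rewrite !notin.
Qed.

Lemma hcompE (s : seq P) (f : P -> L) x : uniq s -> (forall p, Gp p (f p)) ->
  x = \sum_(p <- s) f p -> forall p, hcomp p x = if p \in s then f p else 0.
Proof.
move=> us Gf E p; have [ud [Gd Ed]] := hdecompP x.
by rewrite /hcomp (homogeneous_decomposition_unique ud us Gd Gf) // -Ed.
Qed.

Lemma hcomp_hom q x : Gp q x -> forall p, hcomp p x = if p == q then x else 0.
Proof.
move=> Gx p; rewrite (@hcompE [:: q] (fun r => if r == q then x else 0) x) ?inE.
- by case: eqP.
- by [].
- by move=> r; case: eqP => [->|_] //; apply: G0.
- by rewrite big_seq1 eqxx.
Qed.

Lemma hcomp_linear p : linear (hcomp p).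
Proof.
move=> a x y; set u := undup (hsupp x ++ hsupp y).
have uu : uniq u by exact: undup_uniq.
have sx : {subset hsupp x <= u} by move=> q; rewrite mem_undup mem_cat => ->.
have sy : {subset hsupp y <= u} by move=> q; rewrite mem_undup mem_cat orbC => ->.
rewrite (@hcompE u (fun r => a *: hcomp r x + hcomp r y)) //.
- case: ifP => // pu.
  have [px py] : p \notin hsupp x /\ p \notin hsupp y.
    by split; apply/negP; [move/sx | move/sy]; rewrite pu.
  by rewrite !hcomp_out // scaler0 addr0.
- move=> r; apply: subspaceD; first exact: G_subspace.
    by apply: subspaceZ; [exact: G_subspace | exact: hcompG].
  exact: hcompG.
- by rewrite big_split /= -scaler_sumr -(hcomp_sum_superset uu sx) -(hcomp_sum_superset uu sy).
Qed.

Lemma hcomp0 p : hcomp p 0 = 0. Proof. exact: lin0 (hcomp_linear p). Qed.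

Lemma hcomp_eq0 x : (forall p, hcomp p x = 0) -> x = 0.
Proof. by move=> h; rewrite [x]hcomp_sum big1 // => p _; apply: h. Qed.

Lemma hcomp_hsum (I : Type) (r : seq I) (F : I -> L) (deg : I -> P) p :
  (forall i, Gp (deg i) (F i)) ->
  hcomp p (\sum_(i <- r) F i) = \sum_(i <- r | deg i == p) F i.
Proof.
move=> GF; rewrite (lin_sum (hcomp_linear p)) [RHS]big_mkcond; apply: eq_bigr => i _.
by rewrite (hcomp_hom (GF i)) eq_sym.
Qed.

Lemma hcomp_of_hom q x : (forall p, p != q -> hcomp p x = 0) -> Gp q x.
Proof.
move=> h; rewrite [x]hcomp_sum.
rewrite (eq_bigr (fun p => if p == q then hcomp p x else 0)); last first.
  by move=> p _; case: eqP => // /eqP; apply: h.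
rewrite -big_mkcond big_pred1_seq ?hsupp_uniq //; case: ifP => _; [exact: hcompG | exact: G0].
Qed.

Lemma hcomp_brr z y b m a l : G b m y ->
  hcomp (a, l) (br z y) = br (hcomp (a - b, l - m) z) y.
Proof.
move=> Gy; rewrite {1}[z]hcomp_sum (lin_sum (br_linearl lieL y)).
rewrite (@hcomp_hsum _ _ _ (fun r => (r.1 + b, r.2 + m))); last first.
  by move=> r; apply: G_br Gy; apply: hcompG.
rewrite (eq_bigl (fun r => r == (a - b, l - m))); last first.
  case=> r1 r2; rewrite !xpair_eqE /=.
  by rewrite [r1 == _]eq_sym [r2 == _]eq_sym !subr_eq [a == _]eq_sym [l == _]eq_sym.
rewrite big_pred1_seq ?hsupp_uniq //; case: ifP => // /negbT /hcomp_out ->.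
by rewrite br0l.
Qed.

Lemma hcomp_brl z y b m a l : G b m y ->
  hcomp (a, l) (br y z) = br y (hcomp (a - b, l - m) z).
Proof.
move=> Gy; rewrite brC // (linN (hcomp_linear _)) (hcomp_brr z _ _ Gy).
by rewrite brC // opprK.
Qed.

Lemma G_Lroot a l x : G a l x -> Lroot G a x.
Proof.
move=> Gx; exists [:: l], (fun l' => if l' == l then x else 0); split.
  by move=> l'; case: eqP => [->|_] //; apply: G0.
by rewrite big_seq1 eqxx.
Qed.

Lemma G_Ldeg a l x : G a l x -> Ldeg G l x.
Proof.
move=> Gx; exists [:: a], (fun a' => if a' == a then x else 0); split.
  by move=> a'; case: eqP => [->|_] //; apply: G0.
by rewrite big_seq1 eqxx.
Qed.

Lemma Ldeg_hcomp l x : Ldeg G l x -> forall p, p.2 != l -> hcomp p x = 0.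
Proof.
case=> s [f [Gf ->]] p pl; rewrite (@hcomp_hsum _ _ _ (fun a => (a, l))) //.
by rewrite big1 // => a /eqP E; move: pl; rewrite -E eqxx.
Qed.

Lemma hcomp_Lroot a x : (forall p, p.1 != a -> hcomp p x = 0) -> Lroot G a x.
Proof.
move=> h; exists (undup [seq r.2 | r <- hsupp x]), (fun l => hcomp (a, l) x).
split=> [l|]; first exact: (hcompG (a, l)).
apply/eqP; rewrite -subr_eq0; apply/eqP; apply: hcomp_eq0 => -[p1 p2].
rewrite (linB (hcomp_linear _)) (@hcomp_hsum _ _ _ (fun l => (a, l))); last first.
  by move=> l; apply: (hcompG (a, l)).
have [->|pa] := eqVneq p1 a; last first.
  by rewrite h // big1 ?subrr // => l /eqP [E _]; move: pa; rewrite E eqxx.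
rewrite (eq_bigl (pred1 p2)); last by move=> l; rewrite xpair_eqE eqxx.
rewrite big_pred1_seq ?undup_uniq //; case: ifP => [_|/negbT ps]; first by rewrite subrr.
rewrite hcomp_out ?subrr //; apply: contra ps => ps.
by rewrite mem_undup; apply/mapP; exists (a, p2).
Qed.

Lemma hcomp_Ldeg l x : (forall p, p.2 != l -> hcomp p x = 0) -> Ldeg G l x.
Proof.
move=> h; exists (undup [seq r.1 | r <- hsupp x]), (fun a => hcomp (a, l) x).
split=> [a|]; first exact: (hcompG (a, l)).
apply/eqP; rewrite -subr_eq0; apply/eqP; apply: hcomp_eq0 => -[p1 p2].
rewrite (linB (hcomp_linear _)) (@hcomp_hsum _ _ _ (fun a => (a, l))); last first.
  by move=> a; apply: (hcompG (a, l)).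
have [->|pl] := eqVneq p2 l; last first.
  by rewrite h // big1 ?subrr // => a /eqP [_ E]; move: pl; rewrite E eqxx.
rewrite (eq_bigl (pred1 p1)); last by move=> a; rewrite xpair_eqE eqxx andbT.
rewrite big_pred1_seq ?undup_uniq //; case: ifP => [_|/negbT ps]; first by rewrite subrr.
rewrite hcomp_out ?subrr //; apply: contra ps => ps.
by rewrite mem_undup; apply/mapP; exists (p1, l).
Qed.

Lemma bilinear_eq_on_homogeneous (F1 F2 : L -> L -> L) :
  (forall y, linear (F1 ^~ y)) -> (forall x, linear (F1 x)) ->
  (forall y, linear (F2 ^~ y)) -> (forall x, linear (F2 x)) ->
  (forall q q' u w, Gp q u -> Gp q' w -> F1 u w = F2 u w) ->
  forall x y, F1 x y = F2 x y.
Proof.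
move=> F1l F1r F2l F2r eqF x y.
rewrite [x]hcomp_sum (lin_sum (F1l y)) (lin_sum (F2l y)); apply: eq_bigr => r _.
rewrite [y]hcomp_sum (lin_sum (F1r _)) (lin_sum (F2r _)); apply: eq_bigr => r' _.
exact: eqF (hcompG r x) (hcompG r' y).
Qed.

(* [cpart c g] is the degree-[g] component of the centroid element [c]: on [L_a^l]
   it is [c] followed by the projection onto [L_a^(l+g)]. *)
Definition cpart (c : L -> L) (g : 'rV[int]_n) (z : L) :=
  \sum_(r <- hsupp z) hcomp (r.1, r.2 + g) (c (hcomp r z)).

Section CentroidParts.
Variables (c : L -> L) (g : 'rV[int]_n).
Hypothesis Cc : in_centroid br c.
Let lin_c := centroid_linear Cc.

Lemma cpart_sum_superset z (u : seq P) : uniq u -> {subset hsupp z <= u} ->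
  cpart c g z = \sum_(r <- u) hcomp (r.1, r.2 + g) (c (hcomp r z)).
Proof.
move=> uu su; rewrite /cpart (big_uniq_superset _ (hsupp_uniq z) uu su).
by apply: eq_bigr => r _; case: ifP => // /negbT /hcomp_out ->; rewrite lin0 // hcomp0.
Qed.

Lemma cpart_linear : linear (cpart c g).
Proof.
move=> a x y; set u := undup (hsupp x ++ hsupp y ++ hsupp (a *: x + y)).
have uu : uniq u by exact: undup_uniq.
have sub_u (w : L) : {subset hsupp w <= hsupp x ++ hsupp y ++ hsupp (a *: x + y)} ->
    {subset hsupp w <= u}.
  by move=> sw q /sw; rewrite mem_undup.
rewrite !(@cpart_sum_superset _ u) //;
  try by apply: sub_u => q; rewrite !mem_cat => ->; rewrite ?orbT.
rewrite scaler_sumr -big_split; apply: eq_bigr => r _.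
by rewrite hcomp_linear lin_c hcomp_linear.
Qed.

Lemma cpart_hom q x : Gp q x -> cpart c g x = hcomp (q.1, q.2 + g) (c x).
Proof.
move=> Gx; rewrite /cpart.
rewrite (eq_bigr (fun r => if r == q then hcomp (q.1, q.2 + g) (c x) else 0)); last first.
  by move=> r _; rewrite (hcomp_hom Gx); case: eqP => [->|_] //; rewrite lin0 // hcomp0.
rewrite -big_mkcond big_pred1_seq ?hsupp_uniq //; case: ifP => // /negbT /hcomp_out.
by rewrite (hcomp_hom Gx) eqxx => ->; rewrite lin0 // hcomp0.
Qed.

Lemma cpart_hsum z : cpart c g z = \sum_(r <- hsupp z) cpart c g (hcomp r z).
Proof. by apply: eq_bigr => r _; rewrite (cpart_hom (hcompG r z)). Qed.

Lemma cpart_brl x y : cpart c g (br x y) = br (cpart c g x) y.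
Proof.
have lin_p := cpart_linear.
apply: (@bilinear_eq_on_homogeneous (fun x y => cpart c g (br x y))
  (fun x y => br (cpart c g x) y)) => [y'|x'|y'|x'|].
- exact: linear_comp lin_p (br_linearl lieL y').
- exact: linear_comp lin_p (br_linearr lieL x').
- exact: linear_comp (br_linearl lieL y') lin_p.
- exact: br_linearr.
- case=> q1 q2 [q1' q2'] u w Gu Gw /=.
  rewrite (@cpart_hom (q1 + q1', q2 + q2') _ (G_br Gu Gw)) (cpart_hom Gu) /=.
  by rewrite (centroid_brl _ _ Cc) (@hcomp_brr (c u) w q1' q2' _ _ Gw) addrK addrAC addrK.
Qed.

Lemma cpart_brr x y : cpart c g (br x y) = br x (cpart c g y).
Proof.
by rewrite (brC lieL) (linN cpart_linear) cpart_brl -(brC lieL).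
Qed.

Lemma cpart_Cdeg : in_Cdeg br G g (cpart c g).
Proof.
split; first by split; [exact: cpart_linear | split; [exact: cpart_brl | exact: cpart_brr]].
move=> m x Lx; apply: hcomp_Ldeg => p pm.
rewrite cpart_hsum (@hcomp_hsum _ _ _ (fun r => (r.1, r.2 + g))); last first.
  by move=> r; rewrite (cpart_hom (hcompG r x)); apply: (hcompG (r.1, r.2 + g)).
rewrite big1 // => r /eqP E; rewrite (Ldeg_hcomp Lx (p := r)) ?lin0 //; first exact: cpart_linear.
by apply: contra pm => /eqP rm; rewrite -E /= rm.
Qed.

End CentroidParts.

Section LieTorus.
Variables (D : seq V) (cor : V -> V -> k).
Hypotheses (char0 : [pchar k] =i pred0) (torusL : is_Lie_torus br G D cor)
  (centrelessL : centreless br).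

Local Notation nz := (nonzero_roots D).

Lemma torus_roots : is_irred_root_system D cor. Proof. by case: torusL => _ []. Qed.

Lemma Lroot_neq0_iff a : (exists x, Lroot G a x /\ x <> 0) <-> a \in D.
Proof. by case: torusL => _ [] _ [] _ [] lt1 _; apply: lt1. Qed.

Lemma torus_sl2 a l : a \in nz -> (exists x, G a l x /\ x <> 0) ->
  exists e f, G a l e /\ G (- a) (- l) f /\
    (forall x, G a l x <-> exists c : k, x = c *: e) /\
    (forall x, G (- a) (- l) x <-> exists c : k, x = c *: f) /\
    (forall b x, inQ D b -> Lroot G b x -> br (br e f) x = cor a b *: x).
Proof. by case: torusL => _ [] _ [] _ [] _ [] _ [] lt2 _; apply: lt2. Qed.

Lemma torus_generated (S : L -> Prop) : is_subspace S ->
  (forall x y, S x -> S y -> S (br x y)) ->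
  (forall a x, a \in nz -> Lroot G a x -> S x) -> forall x, S x.
Proof. by case: torusL => _ [] _ [] _ [] _ [] _ [] _ [] gen _; apply: gen. Qed.

Lemma nonzero_roots_mem a : a \in nz -> a \in D.
Proof. by rewrite mem_nonzero_roots => /andP []. Qed.

Lemma Lroot_nonzero_piece a x : Lroot G a x -> x <> 0 ->
  exists l y, G a l y /\ y <> 0.
Proof.
case=> s [f [Gf Ex]] nx; apply: NNPP => nopiece; apply: nx; rewrite Ex big1 // => l _.
by apply: NNPP => fl; apply: nopiece; exists l, (f l).
Qed.

Lemma Lroot_mem a x : Lroot G a x -> x <> 0 -> a \in D.
Proof. by move=> Lx nx; apply/Lroot_neq0_iff; exists x. Qed.

Lemma root_nonzero_piece a : a \in D -> exists l y, G a l y /\ y <> 0.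
Proof. by move/Lroot_neq0_iff => [x [Lx nx]]; apply: Lroot_nonzero_piece Lx nx. Qed.

Lemma sl2_toral a l y : a \in nz -> G a l y -> y <> 0 ->
  exists e f, (forall x, G a l x <-> exists c : k, x = c *: e) /\ G 0 0 (br e f) /\
    (forall b x, inQ D b -> Lroot G b x -> br (br e f) x = cor a b *: x).
Proof.
move=> an Gy ny; have [e [f [Ge [Gf [He [_ Hh]]]]]] := torus_sl2 an (ex_intro _ y (conj Gy ny)).
by exists e, f; do 2!split => //; have := G_br Ge Gf; rewrite !subrr.
Qed.

(* The toral element [e, f] of an sl2-triple commutes with [c] and acts on each
   [L_b] by the scalar <b, a^v>; since coroots separate roots, [c] cannot move
   a homogeneous element to another root space. *)
Lemma centroid_hcomp_root c b l x : in_centroid br c -> G b l x ->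
  forall p, p.1 != b -> hcomp p (c x) = 0.
Proof.
move=> Cc Gx [p1 p2] /= pb; apply: NNPP => ny; set y := hcomp (p1, p2) (c x) in ny.
have Gy : G p1 p2 y by exact: (hcompG (p1, p2)).
have pD : p1 \in D by apply: Lroot_mem (G_Lroot Gy) ny.
have nx : x <> 0.
  by move=> x0; apply: ny; rewrite /y x0 (lin0 (centroid_linear Cc)) hcomp0.
have bD : b \in D by apply: Lroot_mem (G_Lroot Gx) nx.
move/eqP: pb; apply; apply: (roots_eq_of_coroots char0 torus_roots) => // a an.
have [l0 [y0 [Gy0 ny0]]] := root_nonzero_piece (nonzero_roots_mem an).
have [e [f [_ [Gh Hh]]]] := sl2_toral an Gy0 ny0.
have E1 : br (br e f) (c x) = cor a b *: c x.
  by rewrite -centroid_brr // (Hh b x (mem_roots_inQ bD) (G_Lroot Gx)) (linZ (centroid_linear Cc)).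
have := hcomp_brl (c x) p1 p2 Gh.
rewrite !subr0 -/y (Hh p1 y (mem_roots_inQ pD) (G_Lroot Gy)) E1.
rewrite (linZ (hcomp_linear _)) -/y => /eqP.
rewrite -subr_eq0 -scalerBl scaler_eq0 subr_eq0 => /orP [/eqP -> //|/eqP y_eq0].
by case: ny.
Qed.

Lemma Lroot_centroid c a x : in_centroid br c -> Lroot G a x -> Lroot G a (c x).
Proof.
move=> Cc [s [f [Gf ->]]]; apply: hcomp_Lroot => p pa.
rewrite (lin_sum (centroid_linear Cc)) (lin_sum (hcomp_linear p)) big1 // => l _.
exact: (centroid_hcomp_root Cc (Gf l)).
Qed.

Definition graded_ideal (I : L -> Prop) :=
  is_subspace I /\ (forall x z, I x -> I (br x z)) /\ (forall p x, I x -> I (hcomp p x)).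

Lemma centralises_root_spaces_eq0 x :
  (forall a l y, a \in nz -> G a l y -> br x y = 0) -> x = 0.
Proof.
move=> cent; apply: centrelessL; apply: (torus_generated (S := fun z => br x z = 0)).
- split=> [|a y z /= Ey Ez]; first exact: br0r.
  by rewrite (br_linearr lieL) Ey Ez scaler0 addr0.
- move=> y z /= Ey Ez; have := br_jacobi lieL x y z.
  by rewrite Ey (br0r lieL) (brC lieL z x) Ez oppr0 (br0r lieL) !addr0.
- move=> a y an [s [f [Gf ->]]]; rewrite (lin_sum (br_linearr lieL x)) big1 // => l _.
  exact: cent an (Gf l).
Qed.

(* [I] contains the generator [e] of [L_a^l], hence [[[e, f], x] = <b, a^v> x] for [x] in [L_b]. *)
Lemma graded_ideal_root_space I a l e' : graded_ideal I -> a \in nz ->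
  G a l e' -> I e' -> e' <> 0 ->
  forall b, inQ D b -> cor a b != 0 -> forall x, Lroot G b x -> I x.
Proof.
move=> [subI [brI _]] an Ge Ie ne b bQ cb x Lx.
have [e [f [He [_ Hh]]]] := sl2_toral an Ge ne.
have [c Ec] := (He e').1 Ge.
have c0 : c != 0 by apply/negP => /eqP c0; apply: ne; rewrite Ec c0 scale0r.
have Ie0 : I e by have := subspaceZ subI (c^-1) Ie; rewrite Ec scalerA mulVf // scale1r.
have := subspaceZ subI (cor a b)^-1 (brI _ x (brI _ f Ie0)).
by rewrite (Hh b x bQ Lx) scalerA mulVf // scale1r.
Qed.

Lemma graded_ideal_root_vector I : graded_ideal I -> (exists x, I x /\ x <> 0) ->
  exists a l e, [/\ a \in nz, G a l e, I e & e <> 0].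
Proof.
move=> [_ [brI compI]] [x0 [Ix0 nx0]].
have [p np] : exists p, hcomp p x0 <> 0.
  apply: NNPP => h; apply: nx0; apply: hcomp_eq0 => p.
  by apply: NNPP => hp; apply: h; exists p.
set x := hcomp p x0 in np.
have Ix : I x by apply: compI.
have Gx : G p.1 p.2 x by apply: hcompG.
have [p0|p0] := eqVneq p.1 0; last first.
  exists p.1, p.2, x; split => //.
  by rewrite mem_nonzero_roots p0 /=; apply: Lroot_mem (G_Lroot Gx) np.
have [a [l [y [an Gy ny]]]] : exists a l y, [/\ a \in nz, G a l y & br x y <> 0].
  apply: NNPP => h; apply: np; apply: centralises_root_spaces_eq0 => a l y an Gy.
  by apply: NNPP => hy; apply: h; exists a, l, y.
exists a, (p.2 + l), (br x y); split => //; last exact: brI.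
by have := G_br Gx Gy; rewrite p0 add0r.
Qed.

(* A nonzero graded ideal contains a whole root space; irreducibility of the root
   system propagates this to every root space, and these generate [L]. *)
Lemma graded_ideal_full I : graded_ideal I -> (exists x, I x /\ x <> 0) -> forall x, I x.
Proof.
move=> gI nzI; have [subI [brI _]] := gI.
have [a [v [e' [an Ge Ie ne]]]] := graded_ideal_root_vector gI nzI.
pose inI : pred V := fun b => asbool (forall x, Lroot G b x -> I x).
have inI_a : inI a.
  apply/asboolP; apply: (graded_ideal_root_space gI an Ge Ie ne).
    exact/mem_roots_inQ/nonzero_roots_mem.
  by rewrite (coroot_self torus_roots an) (natf_neq0 char0 (j := 2)).
have : all inI nz || all (predC inI) nz.
  case: torus_roots => _ [_ [_ [_ [_ irr]]]]; apply: irr => b c bn cn /asboolP Ib.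
  apply: contraNeq => cbc; apply/asboolP.
  have [l [y [Gy ny]]] := root_nonzero_piece (nonzero_roots_mem bn).
  apply: (graded_ideal_root_space gI bn Gy (Ib _ (G_Lroot Gy)) ny) => //.
  exact/mem_roots_inQ/nonzero_roots_mem.
case/orP => [/allP all_inI|/allP /(_ a an) /=]; last by rewrite inI_a.
apply: torus_generated => // [x y Ix _|b x bn]; first exact: brI.
by move/asboolP: (all_inI b bn); apply.
Qed.

Lemma Cdeg_centroid c g : in_Cdeg br G g c -> in_centroid br c. Proof. by case. Qed.

Lemma Cdeg_shift c g b l x : in_Cdeg br G g c -> G b l x -> G b (l + g) (c x).
Proof.
move=> [Cc shift] Gx; apply: (hcomp_of_hom (q := (b, l + g))) => p pq.
have [pb|pb] := eqVneq p.1 b; last exact: (centroid_hcomp_root Cc Gx).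
apply: (Ldeg_hcomp (shift _ _ (G_Ldeg Gx))); apply: contra pq => /eqP E.
by case: p pb E => p1 p2 /= -> ->.
Qed.

Lemma hcomp_Cdeg c g a l z : in_Cdeg br G g c ->
  hcomp (a, l + g) (c z) = c (hcomp (a, l) z).
Proof.
move=> Cd; have lin_c := centroid_linear (Cdeg_centroid Cd).
rewrite {1}[z]hcomp_sum (lin_sum lin_c).
rewrite (@hcomp_hsum _ _ _ (fun r => (r.1, r.2 + g))); last first.
  by move=> r; apply: (Cdeg_shift Cd); exact: (hcompG r z).
rewrite (eq_bigl (pred1 (a, l))); last first.
  by case=> r1 r2; rewrite /= !xpair_eqE (inj_eq (addIr g)).
by rewrite big_pred1_seq ?hsupp_uniq //; case: ifP => // /negbT /hcomp_out ->; rewrite lin0.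
Qed.

Lemma Cdeg_comb (a : k) g c1 c2 : in_Cdeg br G g c1 -> in_Cdeg br G g c2 ->
  in_Cdeg br G g (fun y => a *: c1 y + c2 y).
Proof.
move=> [C1 shift1] [C2 shift2]; split; first exact/(centroidD lieL)/C2/(centroidZ lieL).
move=> m x Lx; apply: hcomp_Ldeg => p pm.
rewrite hcomp_linear (Ldeg_hcomp (shift1 _ _ Lx)) // (Ldeg_hcomp (shift2 _ _ Lx)) //.
by rewrite scaler0 addr0.
Qed.

Lemma Cdeg_comp g1 g2 c1 c2 : in_Cdeg br G g1 c1 -> in_Cdeg br G g2 c2 ->
  in_Cdeg br G (g2 + g1) (fun y => c1 (c2 y)).
Proof.
move=> [C1 shift1] [C2 shift2]; split; first exact: centroid_comp.
by move=> m x Lx; rewrite addrA; apply/shift1/shift2.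
Qed.

Section HomogeneousCentroidElement.
Variables (t : L -> L) (g : 'rV[int]_n).
Hypotheses (Ct : in_Cdeg br G g t) (t_neq0 : exists x, t x <> 0).

Let lin_t := centroid_linear (Cdeg_centroid Ct).

(* The kernel and the image of [t] are graded ideals. *)
Lemma Cdeg_eq0 z : t z = 0 -> z = 0.
Proof.
move=> tz; have [x nx] := t_neq0; apply: NNPP => nz0; apply: nx.
apply: (@graded_ideal_full (fun w => t w = 0)); last by exists z.
split.
  split=> [|a u w /= tu tw]; first exact: lin0.
  by rewrite lin_t tu tw scaler0 addr0.
split=> [u w /= tu|[a l] u /= tu]; first by rewrite (centroid_brl _ _ (Cdeg_centroid Ct)) tu br0l.
by rewrite -(hcomp_Cdeg a l u Ct) tu hcomp0.
Qed.

Lemma Cdeg_inj : injective t.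
Proof. by move=> u v tuv; apply/subr0_eq/Cdeg_eq0; rewrite linB // tuv subrr. Qed.

Lemma Cdeg_surj y : exists z, y = t z.
Proof.
have [x nx] := t_neq0; have Cc := Cdeg_centroid Ct.
apply: (@graded_ideal_full (fun y => exists z, y = t z)); last first.
  by exists (t x); split => //; exists x.
split.
  split=> [|a u w [u' ->] [w' ->]]; first by exists 0; rewrite lin0.
  by exists (a *: u' + w'); rewrite lin_t.
split=> [u w [u' ->]|[a l] u [u' ->]]; first by exists (br u' w); rewrite (centroid_brl _ _ Cc).
by exists (hcomp (a, l - g) u'); rewrite -(hcomp_Cdeg a (l - g) u' Ct) subrK.
Qed.

Lemma Cdeg_inverse : exists ti, [/\ in_Cdeg br G (- g) ti, exists x, ti x <> 0
  & forall y, t (ti y) = y].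
Proof.
have Cc := Cdeg_centroid Ct.
pose ti y := proj1_sig (constructive_indefinite_description _ (Cdeg_surj y)).
have tiK y : t (ti y) = y.
  by rewrite /ti; case: constructive_indefinite_description.
exists ti; split=> //.
  split.
    split=> [a x y|]; first by apply: Cdeg_inj; rewrite lin_t !tiK.
    split=> x y; apply: Cdeg_inj; rewrite ?tiK.
      by rewrite (centroid_brl _ _ Cc) tiK.
    by rewrite (centroid_brr _ _ Cc) tiK.
  move=> m x Lx; apply: hcomp_Ldeg => -[p1 p2] /= pm; apply: Cdeg_eq0.
  rewrite -(hcomp_Cdeg _ _ _ Ct) tiK; apply: (Ldeg_hcomp Lx) => /=.
  by apply: contra pm => /eqP <-; rewrite addrK.
have [x nx] := t_neq0; exists (t x); rewrite (Cdeg_inj (tiK (t x))).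
by move=> x0; apply: nx; rewrite x0 lin0.
Qed.

End HomogeneousCentroidElement.

(* The pieces [L_a^l] of a nonzero root [a] are at most one-dimensional (LT2), so
   [d] is a multiple [s t] on one nonzero piece; then [d - s t] has a nonzero
   kernel and therefore vanishes. *)
Lemma Cdeg_scalar t d g : in_Cdeg br G g t -> (exists x, t x <> 0) ->
  in_Cdeg br G g d -> exists s : k, forall y, d y = s *: t y.
Proof.
move=> Ct tn Cd; have [a an] := nonzero_root_exists torus_roots.
have [l [e0 [Ge0 ne0]]] := root_nonzero_piece (nonzero_roots_mem an).
have Gt : G a (l + g) (t e0) by apply: (Cdeg_shift Ct).
have Gd : G a (l + g) (d e0) by apply: (Cdeg_shift Cd).
have nt : t e0 <> 0 by move/(Cdeg_eq0 Ct tn).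
have [e [f [He _]]] := sl2_toral an Gt nt.
have [[c1 E1] [c2 E2]] := ((He _).1 Gt, (He _).1 Gd).
have c1_neq0 : c1 != 0 by apply: contra_notN nt => /eqP c0; rewrite E1 c0 scale0r.
exists (c2 / c1) => y; apply: NNPP => ne; apply: ne0.
have Cdt : in_Cdeg br G g (fun y => - (c2 / c1) *: t y + d y).
  by apply: Cdeg_comb.
apply: (Cdeg_eq0 Cdt); last by rewrite E1 E2 scalerA mulNr divfK // scaleNr addNr.
exists y => E; apply: ne; apply/eqP; rewrite -subr_eq0 addrC -scaleNr; exact/eqP.
Qed.

Lemma Gamma0 : in_Gamma br G 0.
Proof.
exists id; split; first by split=> [|m x]; [exact: centroid_id | rewrite addr0].
by have [x [_ nx]] := (Lroot_neq0_iff 0).2 (root0 torus_roots); exists x.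
Qed.

Lemma Gamma_sub u v : in_Gamma br G u -> in_Gamma br G v -> in_Gamma br G (u - v).
Proof.
move=> [cu [Cu [x nx]]] [cv [Cv nv]].
have [ti [Ci ni _]] := Cdeg_inverse Cv nv.
exists (fun y => ti (cu y)); split; first exact: Cdeg_comp Ci Cu.
by exists x => /(Cdeg_eq0 Ci ni).
Qed.

Lemma centroid_eq0_of_parts c : in_centroid br c ->
  (forall g y, cpart c g y = 0) -> forall y, c y = 0.
Proof.
move=> Cc cpart0 y; apply: hcomp_eq0 => p.
rewrite [y]hcomp_sum (lin_sum (centroid_linear Cc)) (lin_sum (hcomp_linear p)) big1 // => r _.
have [pr|pr] := eqVneq p.1 r.1; last exact: (centroid_hcomp_root Cc (hcompG r y)).
rewrite -(cpart0 (p.2 - r.2) (hcomp r y)) (cpart_hom _ Cc (hcompG r y)) addrC subrK.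
by case: p pr => p1 p2 /= ->; case: r.
Qed.

Section CosetRepresentatives.
Variables (m : nat) (reps : 'I_m.+1 -> 'rV[int]_n).
Hypothesis repsP : coset_reps br G reps.
Local Notation d0 := ((0 : L), ((0, 0) : P)).

Lemma reps_inj : injective reps.
Proof. by move=> i j E; case: repsP => _ [_]; apply; rewrite E subrr; exact: Gamma0. Qed.

(* A nonzero degree-[h] part of [c] forces [h] into [Gamma]; here
   [h = l' + g - l] with [g] in [Gamma], so [l] and [l'] lie in the same coset. *)
Lemma hcomp_centroid_other_label c g q q' x i j :
  in_centroid br c -> in_Gamma br G g -> Gp q x -> q.2 = reps i -> q'.2 = reps j ->
  q != q' -> hcomp (q'.1, q'.2 + g) (c x) = 0.
Proof.
case: q q' => [a l] [a' l'] /= Cc Gg Gx li l'j qq'.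
have [aa'|aa'] := eqVneq a' a; last exact: (centroid_hcomp_root Cc Gx).
have -> : (a', l' + g) = (a, l + (l' + g - l)) by rewrite aa' [l + _]addrC subrK.
rewrite -(@cpart_hom c _ Cc (a, l) x Gx); apply: NNPP => ne.
have Gh : in_Gamma br G (l' + g - l).
  by exists (cpart c (l' + g - l)); split; [exact: cpart_Cdeg | exists x].
have := Gamma_sub Gh Gg; rewrite addrAC addrK li l'j => /(proj2 (proj2 repsP)) ji.
by move: qq'; rewrite aa' li l'j ji eqxx.
Qed.

(* Fix a coefficient [cs i0] and a degree [g] with [cpart (cs i0) g <> 0]; projecting
   the relation onto degree [(label i0) + (0, g)] kills every vector with another
   label and turns it into a k-linear relation among the vectors labelled like [i0]. *)
Lemma centroid_free_of_labelled_free (sl : seq (L * P)) :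
  (forall x, x \in sl -> Gp x.2 x.1) -> (forall x, x \in sl -> exists i, x.2.2 = reps i) ->
  labelled_free (0, 0) sl ->
  forall cs : 'I_(size (map fst sl)) -> L -> L, (forall i, in_centroid br (cs i)) ->
  \sum_(i < size (map fst sl)) cs i (map fst sl)`_i = 0 -> forall i y, cs i y = 0.
Proof.
move=> Gsl repsl freesl cs Ccs sum0 i0.
apply: (centroid_eq0_of_parts (Ccs i0)) => g y; apply: NNPP => ne.
have [t [Ct tn]] : in_Gamma br G g.
  by exists (cpart (cs i0) g); split; [exact: cpart_Cdeg | exists y].
have size_sl : size (map fst sl) = size sl by rewrite size_map.
have nth_sl (i : 'I_(size (map fst sl))) : (map fst sl)`_i = (nth d0 sl i).1.
  by rewrite (nth_map d0) // -size_sl.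
have mem_sl (i : 'I_(size (map fst sl))) : nth d0 sl i \in sl.
  by apply: mem_nth; rewrite -size_sl.
have [sc Hsc] : exists sc : 'I_(size (map fst sl)) -> k,
    forall i y, cpart (cs i) g y = sc i *: t y.
  apply: (@fin_all_exists _ (fun _ => k) (fun i s => forall y, _ = s *: t y)) => i.
  exact: Cdeg_scalar Ct tn (cpart_Cdeg _ (Ccs i)).
set q0 := (nth d0 sl i0).2.
have [j0 Hj0] := repsl _ (mem_sl i0).
pose c' (j : nat) := oapp sc 0 (insub j).
have : \sum_(0 <= j < size sl | (nth d0 sl j).2 == q0) c' j *: (nth d0 sl j).1 = 0.
  apply: (Cdeg_eq0 Ct tn); rewrite (lin_sum (centroid_linear (Cdeg_centroid Ct))).
  rewrite -size_sl big_mkord big_mkcond /=.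
  transitivity (hcomp (q0.1, q0.2 + g) (\sum_(i < size (map fst sl)) cs i (map fst sl)`_i)).
    rewrite (lin_sum (hcomp_linear _)); apply: eq_bigr => i _.
    rewrite nth_sl; case: eqP => [lq|/eqP lq].
      rewrite /c' valK /= (linZ (centroid_linear (Cdeg_centroid Ct))) -Hsc.
      by rewrite (cpart_hom _ (Ccs i) (Gsl _ (mem_sl i))) lq.
    have [j Hj] := repsl _ (mem_sl i).
    by rewrite (hcomp_centroid_other_label (Ccs i) _ (Gsl _ (mem_sl i)) Hj Hj0) //; exists t.
  by rewrite sum0 hcomp0.
move/(freesl q0 c')/(_ i0); rewrite -size_sl ltn_ord eqxx /c' valK /= => /(_ isT isT) sc0.
by apply: ne; rewrite Hsc sc0 scale0r.
Qed.

Variable Bs : V -> 'I_m.+1 -> seq L.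
Hypothesis BsP : forall a i, a \in D -> k_basis (G a (reps i)) (Bs a i).

Definition Bs_lab a i := [seq (b, (a, reps i)) | b <- Bs a i].
Definition Balpha_lab a :=
  if a \in D then flatten [seq Bs_lab a i | i <- enum 'I_m.+1] else [::].
Definition Ball_lab := flatten [seq Balpha_lab a | a <- D].

Lemma Balpha_labE a : map fst (Balpha_lab a) = Balpha D Bs a.
Proof.
rewrite /Balpha_lab /Balpha; case: ifP => // _; rewrite map_flatten -map_comp.
by congr flatten; apply: eq_map => i /=; rewrite -map_comp map_id.
Qed.

Lemma Ball_labE : map fst Ball_lab = Ball D Bs.
Proof.
rewrite /Ball_lab /Ball map_flatten -map_comp.
by congr flatten; apply: eq_map => a /=; rewrite Balpha_labE.
Qed.

Lemma mem_Balpha_lab a x : x \in Balpha_lab a ->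
  a \in D /\ exists i, x.2 = (a, reps i) /\ x.1 \in Bs a i.
Proof.
rewrite /Balpha_lab; case: ifP => aD //.
by move/flattenP => [s /mapP [i _ ->] /mapP [b bi ->]]; split => //; exists i.
Qed.

Lemma Balpha_lab_hom a x : x \in Balpha_lab a -> Gp x.2 x.1.
Proof. by case/mem_Balpha_lab => aD [i [-> xi]]; case: (BsP i aD) => inB _; exact: inB. Qed.

Lemma mem_Ball_lab x : x \in Ball_lab -> exists2 a, a \in D & x \in Balpha_lab a.
Proof. by move/flattenP => [s /mapP [a aD ->] xs]; exists a. Qed.

Lemma Balpha_lab_free a : labelled_free (0, 0) (Balpha_lab a).
Proof.
rewrite /Balpha_lab; case: ifP => aD //.
apply: (@labelled_free_flatten _ _ _ _ _ _ _ (fun p => odflt ord0 [pick i | reps i == p.2])).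
- exact: enum_uniq.
- by move=> i _; apply: labelled_free_const; case: (BsP i aD) => _ [].
- move=> i x _ /mapP [b _ ->] /=.
  by case: pickP => [j /eqP /reps_inj -> //|/(_ i)]; rewrite eqxx.
Qed.

Lemma Ball_lab_free : labelled_free (0, 0) Ball_lab.
Proof.
apply: (@labelled_free_flatten _ _ _ _ _ _ _ fst); first exact: roots_uniq torus_roots.
  by move=> a _; apply: Balpha_lab_free.
by move=> a x _ /mem_Balpha_lab [_ [i [-> _]]].
Qed.

(* [L_a^l = t (L_a^(reps i))] for a nonzero [t] in [C^(l - reps i)]. *)
Lemma G_Cspan a l y : a \in D -> G a l y -> in_Cspan br (Balpha D Bs a) y.
Proof.
move=> aD Gy; case: repsP => _ [cosets _]; have [i [t [Ct tn]]] := cosets l.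
have [z Ez] := Cdeg_surj Ct tn y.
have Gz : G a (reps i) z.
  apply: (hcomp_of_hom (q := (a, reps i))) => -[p1 p2] pq; apply: (Cdeg_eq0 Ct tn).
  rewrite -(hcomp_Cdeg p1 p2 z Ct) -Ez (hcomp_hom (q := (a, l)) Gy).
  case: eqP => // -[e1 e2]; move: pq; rewrite e1.
  have -> : p2 = reps i by rewrite -[p2](addrK (l - reps i)) e2 opprB addrC subrK.
  by rewrite eqxx.
have [_ [spanB _]] := BsP i aD; have [c Ec] := spanB z Gz.
rewrite /Balpha aD Ez Ec; apply: (Cspan_flatten lieL (F := Bs a) (i := i)).
  by rewrite mem_enum.
exact: Cspan_centroid_kcomb (Cdeg_centroid Ct).
Qed.

Lemma Lroot_Cspan a x : a \in D -> Lroot G a x -> in_Cspan br (Balpha D Bs a) x.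
Proof.
by move=> aD [s [f [Gf ->]]]; apply: (Cspan_sum lieL) => l; apply: G_Cspan (Gf l).
Qed.

Lemma Cspan_Ball x : in_Cspan br (Ball D Bs) x.
Proof.
rewrite [x]hcomp_sum; apply: (Cspan_sum lieL) => r.
have [rD|rD] := boolP (r.1 \in D).
  by apply: (Cspan_flatten lieL (F := Balpha D Bs) rD); apply: G_Cspan (hcompG r x).
suff -> : hcomp r x = 0 by exact: Cspan0.
by apply: NNPP => ne; move/negP: rD; apply; exact: Lroot_mem (G_Lroot (hcompG r x)) ne.
Qed.

Lemma mem_Balpha a b : b \in Balpha D Bs a -> exists i, G a (reps i) b.
Proof.
rewrite -Balpha_labE => /mapP [x xa ->].
have [_ [i [E _]]] := mem_Balpha_lab xa; exists i; have := Balpha_lab_hom xa; by rewrite E.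
Qed.

Lemma Balpha_centroid_basis a : inQ D a ->
  centroid_basis br (Lroot G a) (Balpha D Bs a).
Proof.
move=> aQ; split; first by move=> b /mem_Balpha [i Gb]; apply: G_Lroot Gb.
split.
  move=> x Lx; apply/CspanP; have [aD|aD] := boolP (a \in D); first exact: Lroot_Cspan.
  suff -> : x = 0 by exact: Cspan0.
  by apply: NNPP => ne; move/negP: aD; apply; exact: Lroot_mem Lx ne.
rewrite -Balpha_labE; apply: centroid_free_of_labelled_free.
- exact: Balpha_lab_hom.
- by move=> x /mem_Balpha_lab [_ [i [-> _]]]; exists i.
- exact: Balpha_lab_free.
Qed.

Lemma Ball_centroid_basis : centroid_basis br (fun _ => True) (Ball D Bs).
Proof.
split=> //; split=> [x _|]; first exact/CspanP/Cspan_Ball.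
rewrite -Ball_labE; apply: centroid_free_of_labelled_free.
- by move=> x /mem_Ball_lab [a _ xa]; apply: Balpha_lab_hom xa.
- by move=> x /mem_Ball_lab [a _ /mem_Balpha_lab [_ [i [-> _]]]]; exists i.
- exact: Ball_lab_free.
Qed.

End CosetRepresentatives.
End LieTorus.
End Grading.

Theorem proposition5p1 (k : fieldType) (V : vectType k) (L : lmodType k) (n : nat)
    (br : L -> L -> L) (G : V -> 'rV[int]_n -> L -> Prop) (D : seq V)
    (cor : V -> V -> k) (m : nat) (reps : 'I_m.+1 -> 'rV[int]_n)
    (Bs : V -> 'I_m.+1 -> seq L) :
  [pchar k] =i pred0 ->
  is_Lie_torus br G D cor -> fgc br -> centreless br ->
  coset_reps br G reps ->
  (forall a i, a \in D -> k_basis (G a (reps i)) (Bs a i)) ->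
  (forall a, inQ D a ->
     (forall c x, in_centroid br c -> Lroot G a x -> Lroot G a (c x)) /\
     centroid_basis br (Lroot G a) (Balpha D Bs a) /\
     (forall b, b \in Balpha D Bs a -> exists l, Ldeg G l b)) /\
  (centroid_basis br (fun _ => True) (Ball D Bs) /\
   (forall b, b \in Ball D Bs -> exists a l, G a l b)).
Proof.
move=> char0 torusL _ centrelessL repsP BsP.
have lieL : is_lie_algebra br by case: torusL.
have gradG : is_graded br G by case: torusL => _ [] _ [].
have mem_B a b : b \in Balpha D Bs a -> exists i, G a (reps i) b.
  exact: (mem_Balpha BsP).
split=> [a aQ|]; last split.
- split=> [c x Cc|]; first exact: (Lroot_centroid lieL gradG char0 torusL).
  split; first exact: (Balpha_centroid_basis lieL gradG char0 torusL centrelessL repsP BsP).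
  by move=> b /mem_B [i Gb]; exists (reps i); exact: (G_Ldeg gradG Gb).
- exact: (Ball_centroid_basis lieL gradG char0 torusL centrelessL repsP BsP).
- by move=> b /flattenP [s /mapP [a _ ->] /mem_B [i Gb]]; exists a, (reps i).
Qed.
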